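(* Let $\psi:[0,\infty]\to[0,\infty]$ be a sense-reversing homeomorphism and $\varphi:[0,\infty]\to[0,\infty]$ a monotone function. Then $$[\psi\circ\varphi]^{-1}(\tau)=\varphi^{-1}\circ\psi^{-1}(\tau)\quad\forall\tau\in[0,\infty],$$ $$[\varphi\circ\psi]^{-1}(\tau)\le\psi^{-1}\circ\varphi^{-1}(\tau)\quad\forall\tau\in[0,\infty],$$ and, except for a countable collection of $\tau\in[0,\infty]$, $[\varphi\circ\psi]^{-1}(\tau)=\psi^{-1}\circ\varphi^{-1}(\tau)$. The last equality holds for all $\tau\in[0,\infty]$ if and only if $\varphi$ is strictly monotone.
   Context: Inverse functions of monotone functions are defined as follows: for a non-decreasing $\Phi:[0,\infty]\to[0,\infty]$, $\Phi^{-1}(\tau)=\inf\{t\in[0,\infty]:\Phi(t)\ge\tau\}$; for a non-increasing $\varphi:[0,\infty]\to[0,\infty]$, $\varphi^{-1}(\tau)=\inf\{t\in[0,\infty]:\varphi(t)\le\tau\}$; in both cases $\inf\emptyset=\infty$. *)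

(* [0,oo] is modelled as the nonnegative part of \bar R. *)
From HB Require Import structures.
From mathcomp Require Import all_boot all_order all_algebra.
From mathcomp Require Import all_classical all_reals all_analysis.
Set Implicit Arguments. Unset Strict Implicit. Unset Printing Implicit Defensive.
Import Order.TTheory GRing.Theory Num.Theory.
Local Open Scope classical_set_scope.
Local Open Scope ring_scope.
Local Open Scope ereal_scope.

Section Defs.
Context {R : realType}.

Definition nonneg_ext : set (\bar R) := [set x | 0 <= x].

Definition maps_nonneg (f : \bar R -> \bar R) := forall x, 0 <= x -> 0 <= f x.

Definition homeo_nonneg (f : \bar R -> \bar R) :=
  exists g : \bar R -> \bar R,
    [/\ maps_nonneg f /\ maps_nonneg g,
        (forall x, 0 <= x -> g (f x) = x),
        (forall x, 0 <= x -> f (g x) = x),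
        {within nonneg_ext, continuous f} &
        {within nonneg_ext, continuous g}].

Definition sense_reversing (f : \bar R -> \bar R) :=
  forall x y, 0 <= x -> x < y -> f y < f x.

Definition monotone_sense (inc : bool) (f : \bar R -> \bar R) :=
  forall x y, 0 <= x -> x <= y -> if inc then f x <= f y else f y <= f x.

Definition strictly_monotone (f : \bar R -> \bar R) :=
  (forall x y, 0 <= x -> x < y -> f x < f y) \/
  (forall x y, 0 <= x -> x < y -> f y < f x).

(* generalized inverse of a monotone function of sense inc:
   inc = true : inf {t in [0,oo] | f t >= tau}
   inc = false: inf {t in [0,oo] | f t <= tau}; inf of the empty set is +oo *)
Definition ginv (inc : bool) (f : \bar R -> \bar R) (tau : \bar R) : \bar R :=
  ereal_inf [set t | 0 <= t /\ (if inc then tau <= f t else f t <= tau)].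

End Defs.

From HB Require Import structures.
From mathcomp Require Import all_boot all_order all_algebra.
From mathcomp Require Import all_classical all_reals all_analysis.
Set Implicit Arguments. Unset Strict Implicit. Unset Printing Implicit Defensive.
Import Order.TTheory GRing.Theory Num.Theory.
Local Open Scope classical_set_scope.
Local Open Scope ring_scope.
Local Open Scope ereal_scope.

(* Since psi is an order-reversing bijection of [0,oo] with inverse g, the
   condition [psi (phi t) <= tau] is [g tau <= phi t], which gives the first
   identity, and [psi^-1 = g].  For the composition the other way round,
   the t satisfying the condition on [phi (psi t)] form a half-line whose
   infimum equals [g (phi^-1 tau)] unless phi is constant (equal to tau) on a
   nondegenerate interval; such an interval contains a rational, so this
   happens only for tau in the countable image of the rationals, and it never
   happens iff phi is strictly monotone. *)

Definition flat_at {R : realType} (phi : \bar R -> \bar R) (tau : \bar R) :=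
  exists v u, [/\ 0 <= v, v < u, phi v = tau & phi u = tau].

Section GeneralizedInverse.
Context {R : realType}.
Implicit Types (phi : \bar R -> \bar R) (tau : \bar R).

Lemma ginv_ge0 inc phi tau : 0 <= ginv inc phi tau.
Proof. by apply/ereal_infP => y []. Qed.

Lemma ginv_le inc phi tau u : 0 <= u ->
  (if inc then tau <= phi u else phi u <= tau) -> ginv inc phi tau <= u.
Proof. by move=> u0 h; apply/ereal_inf_lbound. Qed.

Lemma lt_ginv inc phi tau u : 0 <= u -> u < ginv inc phi tau ->
  if ~~ inc then tau <= phi u else phi u <= tau.
Proof.
move=> u0 us; have : ~~ (if inc then tau <= phi u else phi u <= tau).
  by apply/negP => /(ginv_le u0); rewrite leNgt us.
by case: inc {us} => /=; rewrite -ltNge => /ltW.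
Qed.

End GeneralizedInverse.

Section DecreasingBijection.
Context {R : realType}.
Variables (psi g : \bar R -> \bar R).
Hypotheses (psi_ge0 : maps_nonneg psi) (g_ge0 : maps_nonneg g)
  (psiK : forall x, 0 <= x -> psi (g x) = x)
  (psi_dec : sense_reversing psi).

Lemma le_psi x y : 0 <= x -> 0 <= y -> (psi x <= psi y) = (y <= x).
Proof.
move=> x0 y0; apply/idP/idP => [h|].
  by rewrite leNgt; apply/negP => /(psi_dec x0); rewrite ltNge h.
by rewrite le_eqVlt => /orP[/eqP->//|/(psi_dec y0)/ltW].
Qed.

Lemma le_psiLR x y : 0 <= x -> 0 <= y -> (psi x <= y) = (g y <= x).
Proof. by move=> x0 y0; rewrite -{1}(psiK y0) le_psi // g_ge0. Qed.

Lemma le_psiRL x y : 0 <= x -> 0 <= y -> (y <= psi x) = (x <= g y).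
Proof. by move=> x0 y0; rewrite -{1}(psiK y0) le_psi // g_ge0. Qed.

Lemma lt_psiLR x y : 0 <= x -> 0 <= y -> (psi x < y) = (g y < x).
Proof. by move=> x0 y0; rewrite !ltNge le_psiRL. Qed.

Lemma lt_psiRL x y : 0 <= x -> 0 <= y -> (y < psi x) = (x < g y).
Proof. by move=> x0 y0; rewrite !ltNge le_psiLR. Qed.

Lemma le_inv x y : 0 <= x -> 0 <= y -> (g x <= g y) = (y <= x).
Proof. by move=> x0 y0; rewrite -le_psiLR ?g_ge0 // psiK. Qed.

Lemma lt_inv x y : 0 <= x -> 0 <= y -> (g x < g y) = (y < x).
Proof. by move=> x0 y0; rewrite !ltNge le_inv. Qed.

Lemma ginv_sense_reversing tau : 0 <= tau -> ginv false psi tau = g tau.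
Proof.
move=> tau0; apply/le_anti/andP; split.
  by apply: ginv_le; rewrite ?g_ge0 // psiK.
by apply/ereal_infP => t [t0 /=]; rewrite le_psiLR.
Qed.

Variables (phi : \bar R -> \bar R) (inc : bool).
Hypotheses (phi_ge0 : maps_nonneg phi) (phi_mono : monotone_sense inc phi).

Lemma ginv_comp_reversing_left tau : 0 <= tau ->
  ginv (~~ inc) (psi \o phi) tau = ginv inc phi (g tau).
Proof.
move=> tau0; congr ereal_inf; apply/seteqP.
by split=> t /= [t0 h]; split=> //; move: h; have := phi_ge0 t0;
  case: inc => /= phit0; rewrite (le_psiLR, le_psiRL).
Qed.

Lemma ginv_comp_reversing_right_le tau : 0 <= tau ->
  ginv (~~ inc) (phi \o psi) tau <= g (ginv inc phi tau).
Proof.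
move=> tau0; set s := ginv inc phi tau.
have : 0 <= g s by rewrite g_ge0 // ginv_ge0.
case E : (g s) => [r| |] // r0; last by rewrite leey.
(* every point strictly right of g s satisfies the condition *)
apply/lee_addgt0Pr => e e0.
have re0 : 0 <= r%:E + e%:E by rewrite adde_ge0 // lee_fin ltW.
apply: ginv_le => //; apply: (@lt_ginv _ _ phi); first exact: psi_ge0.
by rewrite lt_psiLR ?ginv_ge0 // E -EFinD lte_fin ltrDl.
Qed.

Lemma ginv_comp_reversing_right_lt tau : 0 <= tau ->
  ginv (~~ inc) (phi \o psi) tau < g (ginv inc phi tau) -> flat_at phi tau.
Proof.
move=> tau0 /ereal_inf_lt[t [t0 /= Ct]].
rewrite -lt_psiRL ?ginv_ge0 // => /ereal_inf_lt[v [v0 Dv] vu].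
exists v, (psi t); split => //; have := phi_mono v0 (ltW vu);
  by case: inc Ct Dv => /= Ct Dv h; apply/le_anti; rewrite ?Ct ?Dv;
     rewrite ?(le_trans h Ct) ?(le_trans Ct h) ?(le_trans Dv h) ?(le_trans h Dv).
Qed.

Lemma flat_ginv_comp_reversing_right tau : flat_at phi tau ->
  ginv (~~ inc) (phi \o psi) tau < g (ginv inc phi tau).
Proof.
move=> [v [u [v0 vu <- phiu]]]; have u0 := le_trans v0 (ltW vu).
apply: (@le_lt_trans _ _ (g u)).
  by apply: ginv_le; rewrite ?g_ge0 //= psiK // phiu; case: (~~ inc).
apply: (@lt_le_trans _ _ (g v)); first by rewrite lt_inv.
by rewrite le_inv ?ginv_ge0 //; apply: ginv_le => //; case: inc.
Qed.

Lemma ginv_comp_reversing_rightE tau : 0 <= tau ->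
  ginv (~~ inc) (phi \o psi) tau = g (ginv inc phi tau) <-> ~ flat_at phi tau.
Proof.
move=> tau0; split => [eqg /flat_ginv_comp_reversing_right|nflat].
  by rewrite eqg ltxx.
apply/eqP; rewrite eq_le ginv_comp_reversing_right_le //= leNgt.
by apply/negP => /(ginv_comp_reversing_right_lt tau0)/nflat.
Qed.

End DecreasingBijection.

Section MonotoneLevels.
Context {R : realType}.
Variables (phi : \bar R -> \bar R) (inc : bool).
Hypotheses (phi_ge0 : maps_nonneg phi) (phi_mono : monotone_sense inc phi).

Lemma monotone_sense_constant v w u : 0 <= v -> v <= w -> w <= u ->
  phi v = phi u -> phi w = phi v.
Proof.
move=> v0 vw wu phivu; have := phi_mono v0 vw.
have := phi_mono (le_trans v0 vw) wu.
by case: inc => h1 h2; apply/le_anti/andP; split; rewrite // phivu.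
Qed.

Lemma flat_at_rat tau : flat_at phi tau ->
  exists q : rat, phi (ratr q)%:E = tau.
Proof.
move=> [v [u [v0 vu phiv phiu]]].
have [r vr] : exists r : R, v = r%:E.
  by case: v v0 vu {phiv} => [r _ _| _|//]; [exists r | rewrite ltNge leey].
have [b rb bu] : exists2 b : R, (r < b)%R & b%:E <= u.
  case: u vu {phiu} => [b| _|]; rewrite ?vr.
  - by rewrite lte_fin => rb; exists b.
  - by exists (r + 1)%R; rewrite ?ltrDl ?leey.
  - by rewrite ltNge leNye.
have [q] := rat_in_itvoo rb; rewrite in_itv /= => /andP[rq qb].
exists q; rewrite -phiv; apply: (@monotone_sense_constant _ _ u) => //.
- by rewrite vr lee_fin ltW.
- by rewrite (le_trans _ bu) // lee_fin ltW.
- by rewrite phiv phiu.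
Qed.

Lemma strictly_monotoneP :
  strictly_monotone phi <-> forall tau, 0 <= tau -> ~ flat_at phi tau.
Proof.
split=> [[] smono tau _ [v [u [v0 vu phiv phiu]]]|nflat].
- by have := smono _ _ v0 vu; rewrite phiv phiu ltxx.
- by have := smono _ _ v0 vu; rewrite phiv phiu ltxx.
have neq x y : 0 <= x -> x < y -> phi x != phi y.
  move=> x0 xy; apply/negP => /eqP phixy.
  by apply: (nflat (phi x) (phi_ge0 x0)); exists x, y.
case: inc phi_mono => mono; [left|right] => x y x0 xy.
- by rewrite lt_neqAle neq // mono // ltW.
- by rewrite lt_neqAle eq_sym neq // mono // ltW.
Qed.

End MonotoneLevels.

Theorem lemma2p5 (R : realType) (psi phi : \bar R -> \bar R) (inc : bool) :
  homeo_nonneg psi -> sense_reversing psi ->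
  maps_nonneg phi -> monotone_sense inc phi ->
  [/\ (forall tau, 0 <= tau ->
         ginv (~~ inc) (psi \o phi) tau = ginv inc phi (ginv false psi tau)),
      (forall tau, 0 <= tau ->
         ginv (~~ inc) (phi \o psi) tau <= ginv false psi (ginv inc phi tau)),
      (exists S : set (\bar R), countable S /\
         forall tau, 0 <= tau -> ~ S tau ->
           ginv (~~ inc) (phi \o psi) tau = ginv false psi (ginv inc phi tau)) &
      ((forall tau, 0 <= tau ->
          ginv (~~ inc) (phi \o psi) tau = ginv false psi (ginv inc phi tau))
       <-> strictly_monotone phi)].
Proof.
move=> [g [[psi0 g0] _ psiK _ _]] dec phi0 mono.
have ginv_psi := ginv_sense_reversing g0 psiK dec.
have eqE tau : 0 <= tau -> ginv (~~ inc) (phi \o psi) tau =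
    ginv false psi (ginv inc phi tau) <-> ~ flat_at phi tau.
  move=> tau0; rewrite ginv_psi ?ginv_ge0 //.
  exact: (ginv_comp_reversing_rightE psi0 g0 psiK dec mono).
split.
- move=> tau tau0; rewrite ginv_psi //.
  exact: (ginv_comp_reversing_left g0 psiK dec inc phi0).
- move=> tau tau0; rewrite ginv_psi ?ginv_ge0 //.
  exact: (ginv_comp_reversing_right_le psi0 g0 psiK dec).
- exists [set phi (ratr q)%:E | q in [set: rat]]; split.
    exact: (sub_countable (card_image_le _ _) (countableP _)).
  move=> tau tau0 notS; apply/(eqE _ tau0) => /(flat_at_rat mono)[q phiq].
  by apply: notS; exists q.
- rewrite (strictly_monotoneP phi0 mono).
  by split=> eq tau tau0; apply/(eqE _ tau0)/eq.
Qed.
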